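(* Let $M=\begin{pmatrix}a&b\\c&d\end{pmatrix}$ and $M'=\begin{pmatrix}a'&b'\\c'&d'\end{pmatrix}$ be in $\mathrm{Mat}(2,\mathbb{Z})$ with $\det(M)=\det(M')$, $\mathrm{trace}(M)=\mathrm{trace}(M')$ and $\mathrm{mgcd}(M)=\mathrm{mgcd}(M')=r\in\mathbb{N}$. Then $r$ divides $d-d'$.
   Context: $\mathrm{mgcd}(M)=\gcd(b,c,d-a)\ge0$. *)

From mathcomp Require Import all_boot all_order all_algebra.
Set Implicit Arguments. Unset Strict Implicit. Unset Printing Implicit Defensive.
Import Order.TTheory GRing.Theory Num.Theory.
Local Open Scope ring_scope.

Definition ma (M : 'M[int]_2) : int := M 0 0.
Definition mb (M : 'M[int]_2) : int := M 0 1.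
Definition mc (M : 'M[int]_2) : int := M 1 0.
Definition md (M : 'M[int]_2) : int := M 1 1.

Definition mgcd (M : 'M[int]_2) : int :=
  gcdz (gcdz (mb M) (mc M)) (md M - ma M).

(* With e = d - d', equal traces and determinants give e (d - a') = b'c' - bc,
   a multiple of r^2, while d - a' = e + (d' - a') with r | d' - a'.  After
   dividing e and r by their gcd g, the cofactor r/g divides
   (e/g) (e/g + a multiple of r/g) and is coprime to e/g, so it divides e/g. *)
From mathcomp Require Import all_boot all_order all_algebra.
From mathcomp Require Import ring.
Import GRing.Theory Num.Theory.
Local Open Scope ring_scope.

Lemma coprimez_div_gcdz {m n : int} :
  gcdz m n != 0 -> coprimez (m %/ gcdz m n)%Z (n %/ gcdz m n)%Z.
Proof.
move=> g_neq0; have [u [v uv_gcd]] := Bezoutz m n.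
apply/coprimezP; exists (u, v); apply: (mulIf g_neq0) => /=.
by rewrite mulrDl -!mulrA !divzK ?dvdz_gcdl ?dvdz_gcdr // mul1r.
Qed.

Lemma dvdz_of_sqr_dvd_mulD [d e x : int] :
  (d %| x)%Z -> (d ^+ 2 %| e * (e + x))%Z -> (d %| e)%Z.
Proof.
have [/eqP|g_neq0] := eqVneq (gcdz e d) 0.
  by rewrite gcdz_eq0 => /andP[/eqP -> _]; rewrite dvdz0.
have := coprimez_div_gcdz g_neq0; rewrite coprimez_sym.
have := divzK (dvdz_gcdl e d); have := divzK (dvdz_gcdr e d).
move: g_neq0 (e %/ _)%Z (d %/ _)%Z => g_neq0 e1 d1.
move: (gcdz e d) g_neq0 => g g_neq0 <- <- d1_coprime_e1 /dvdzP[y ->].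
rewrite dvdz_mul2r //.
have -> : e1 * g * (e1 * g + y * (d1 * g)) = e1 * (e1 + y * d1) * g ^+ 2 by ring.
rewrite exprMn dvdz_mul2r ?expf_neq0 // => d1sqr_dvd.
have d1_dvd : (d1 %| e1 * (e1 + y * d1))%Z.
  by apply: dvdz_trans d1sqr_dvd; rewrite expr2 dvdz_mulr.
by move: d1_dvd; rewrite Gauss_dvdzr // rpredDr // dvdz_mull.
Qed.

Lemma det_mx22 (R : comPzRingType) (M : 'M[R]_2) :
  \det M = M 0 0 * M 1 1 - M 0 1 * M 1 0.
Proof.
rewrite (expand_det_row _ 0) !big_ord_recl big_ord0 /cofactor !det_mx11 !mxE /=.
rewrite expr0 expr1 mul1r mulN1r addr0 mulrN.
by congr (_ * M _ _ - M _ _ * M _ _); apply: val_inj.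
Qed.

Lemma mxtrace_mx22 (R : pzSemiRingType) (M : 'M[R]_2) : \tr M = M 0 0 + M 1 1.
Proof.
by rewrite /mxtrace !big_ord_recl big_ord0 addr0; congr (_ + M _ _); apply: val_inj.
Qed.

Lemma mx22_det_tr_eq [R : comPzRingType] [M M' : 'M[R]_2] :
  \det M = \det M' -> \tr M = \tr M' ->
  (M 1 1 - M' 1 1) * (M 1 1 - M' 0 0) = M' 0 1 * M' 1 0 - M 0 1 * M 1 0.
Proof.
rewrite !det_mx22 !mxtrace_mx22 => det_eq tr_eq.
have -> : M' 0 1 * M' 1 0 = M' 0 0 * M' 1 1 - (M 0 0 * M 1 1 - M 0 1 * M 1 0).
  by rewrite det_eq; ring.
have -> : M' 0 0 = M 0 0 + M 1 1 - M' 1 1 by rewrite tr_eq; ring.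
ring.
Qed.

Lemma dvdz_mgcd (d : int) (M : 'M[int]_2) :
  (d %| mgcd M)%Z = [&& (d %| mb M)%Z, (d %| mc M)%Z & (d %| md M - ma M)%Z].
Proof. by rewrite /mgcd !dvdz_gcd andbA. Qed.

Theorem lemma38 (M M' : 'M[int]_2) (r : nat) :
  \det M = \det M' -> \tr M = \tr M' ->
  mgcd M = r%:Z -> mgcd M' = r%:Z ->
  (r%:Z %| md M - md M')%Z.
Proof.
move=> det_eq tr_eq mgcdM mgcdM'.
move: (dvdzz r%:Z); rewrite -{1}mgcdM dvdz_mgcd => /and3P[r_dvd_b r_dvd_c _].
move: (dvdzz r%:Z); rewrite -{1}mgcdM' dvdz_mgcd => /and3P[r_dvd_b' r_dvd_c' r_dvd_x'].
apply: (dvdz_of_sqr_dvd_mulD r_dvd_x').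
have -> : md M - md M' + (md M' - ma M') = md M - ma M' by ring.
rewrite [_ * _](mx22_det_tr_eq det_eq tr_eq) expr2.
by apply: rpredB; apply: dvdz_mul.
Qed.
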